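(* Let $m\in\mathbb{N}$, let $G^1,\dots,G^m$ be compatible nontrivial monotonic hypergraph sequences, and let $1\le t<m$. Then for all $p,q\in\mathbb{R}_{>0}$, $$\mathrm{cr}((G^1,\dots,G^m),p+q)\le\max\big(\mathrm{cr}((G^1,\dots,G^t),p),\ \mathrm{cr}((G^{t+1},\dots,G^m),q)\big).$$
   Context: A finite hypergraph $G=(V,E)$ has finite vertex set $V$ and hyperedge set $E\subseteq\mathcal P(V)$. A sequence $(G_n)_{n\in\mathbb{N}}$ of finite hypergraphs is nontrivial monotonic if $V(G_n)\subseteq V(G_{n+1})$, $E(G_n)\subseteq E(G_{n+1})$ for all $n$, $V(G_1)\ne\emptyset$ and $\emptyset\notin E(G_n)$ for all $n$. Sequences $G^1,\dots,G^m$ are compatible if $V(G^1_n)=\dots=V(G^m_n)$ for all $n$. A set $S$ of vertices is independent in a hypergraph if it contains no hyperedge. For compatible sequences $G^1,\dots,G^r$ and $q\in\mathbb{R}_{>0}$, $\mathrm{cr}((G^1,\dots,G^r),q)\in\mathbb{N}\cup\{+\infty\}$ is the infimum of all $n\in\mathbb{N}$ such that for all $n'\ge n$ and all $r$-tuples $(S_1,\dots,S_r)$ of pairwise disjoint sets with $S_i$ independent in $G^i_{n'}$ we have $\frac{|S_1|+\dots+|S_r|}{|V(G^1_{n'})|}<q$ (infimum of the empty set is $+\infty$). *)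

From HB Require Import structures.
From mathcomp Require Import all_boot all_order all_algebra.
From mathcomp Require Import finmap.
From mathcomp Require Import boolp reals.
Set Implicit Arguments. Unset Strict Implicit. Unset Printing Implicit Defensive.
Import Order.TTheory GRing.Theory Num.Theory.
Local Open Scope fset_scope.

Record hypergraph (T : choiceType) := Hypergraph {
  hV : {fset T};
  hE : {fset {fset T}};
  hE_sub : forall e, e \in hE -> e `<=` hV
}.

Definition empty_hypergraph (T : choiceType) : hypergraph T :=
  @Hypergraph T fset0 fset0 (fun e (H : e \in (fset0 : {fset {fset T}})) =>
     False_ind _ (ltac:(by rewrite in_fset0 in H))).

(* Sequences are indexed by ℕ = {1,2,...}: only the values at n >= 1 matter. *)
Definition hseq (T : choiceType) := nat -> hypergraph T.

Definition hseq_dflt (T : choiceType) : hseq T := fun _ => empty_hypergraph T.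

Definition nontrivial_monotonic (T : choiceType) (G : hseq T) : Prop :=
  [/\ forall n, (1 <= n)%N -> hV (G n) `<=` hV (G n.+1),
      forall n, (1 <= n)%N -> hE (G n) `<=` hE (G n.+1),
      hV (G 1%N) != fset0
    & forall n, (1 <= n)%N -> fset0 \notin hE (G n)].

Definition compatible (T : choiceType) (Gs : seq (hseq T)) : Prop :=
  forall n, (1 <= n)%N -> forall i j, (i < size Gs)%N -> (j < size Gs)%N ->
    hV (nth (@hseq_dflt T) Gs i n) = hV (nth (@hseq_dflt T) Gs j n).

Definition independent (T : choiceType) (G : hypergraph T) (S : {fset T}) : Prop :=
  S `<=` hV G /\ forall e, e \in hE G -> ~~ (e `<=` S).


Definition cr_good (R : realType) (T : choiceType) (Gs : seq (hseq T)) (q : R)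
    (n : nat) : Prop :=
  (1 <= n)%N /\
  forall n', (n <= n')%N -> forall S : nat -> {fset T},
    (forall i j, (i < size Gs)%N -> (j < size Gs)%N -> i != j ->
        S i `&` S j = fset0) ->
    (forall i, (i < size Gs)%N -> independent (nth (@hseq_dflt T) Gs i n') (S i)) ->
    ((\sum_(i < size Gs) #|` S i|)%:R / (#|` hV (nth (@hseq_dflt T) Gs 0 n')|)%:R
       < q)%R.

(* ℕ ∪ {+∞} as option nat, None = +∞ *)
Definition cr (R : realType) (T : choiceType) (Gs : seq (hseq T)) (q : R)
    : option nat :=
  match pselect (exists n, cr_good Gs q n) with
  | left H => Some (@ex_minn (fun n => `[< cr_good Gs q n >]%bool)
                      (let: ex_intro n Hn := H in
                       ex_intro _ n (asboolT Hn)))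
  | right _ => None
  end.

Definition enat_le (a b : option nat) : Prop :=
  match a, b with
  | _, None => True
  | None, Some _ => False
  | Some x, Some y => (x <= y)%N
  end.

Definition enat_max (a b : option nat) : option nat :=
  match a, b with
  | Some x, Some y => Some (maxn x y)
  | _, _ => None
  end.

From HB Require Import structures.
From mathcomp Require Import all_boot all_order all_algebra.
From mathcomp Require Import finmap.
From mathcomp Require Import boolp reals.
Import Order.TTheory GRing.Theory Num.Theory.

(* A disjoint tuple of independent sets for [Gs1 ++ Gs2] splits into one for
   [Gs1] and one for [Gs2]; by compatibility both densities are measured against
   the same vertex count, so once they are below [p] and [q] respectively the
   total density is below [p + q]. *)

Section CrCat.
Variables (R : realType) (T : choiceType).
Local Notation nthG Gs i := (nth (@hseq_dflt T) Gs i).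

Lemma cr_good_le (Gs : seq (hseq T)) (q : R) n :
  cr_good Gs q n -> enat_le (cr Gs q) (Some n).
Proof.
move=> good_n; rewrite /cr; case: pselect => [H|]; last by case; exists n.
by case: ex_minnP => k _ /=; apply; apply/asboolP.
Qed.

Lemma cr_SomeP (Gs : seq (hseq T)) (q : R) a :
  cr Gs q = Some a -> cr_good Gs q a.
Proof.
by rewrite /cr; case: pselect => // H [<-]; case: ex_minnP => k /asboolP.
Qed.

Lemma compatible_cat_head (Gs1 Gs2 : seq (hseq T)) n :
  compatible (Gs1 ++ Gs2) -> (0 < size Gs1)%N -> (0 < size Gs2)%N ->
  (1 <= n)%N -> hV (nthG Gs2 0 n) = hV (nthG Gs1 0 n).
Proof.
move=> comp pos1 pos2 n_ge1.
have := comp n n_ge1 (size Gs1) 0%N; rewrite !nth_cat ltnn subnn pos1.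
by apply; rewrite size_cat ?addn_gt0 ?pos1 // -{1}[size Gs1]addn0 ltn_add2l.
Qed.

Lemma cr_good_cat (Gs1 Gs2 : seq (hseq T)) (p q : R) a b :
  (0 < size Gs1)%N ->
  (forall n, (1 <= n)%N -> hV (nthG Gs2 0 n) = hV (nthG Gs1 0 n)) ->
  cr_good Gs1 p a -> cr_good Gs2 q b -> cr_good (Gs1 ++ Gs2) (p + q) (maxn a b).
Proof.
move=> pos1 headV [a_ge1 good_a] [b_ge1 good_b].
split=> [|n]; first by rewrite leq_max a_ge1.
rewrite geq_max => /andP[a_le_n b_le_n] S disjS indS.
have lt_cat1 i : (i < size Gs1)%N -> (i < size (Gs1 ++ Gs2))%N.
  by move=> lt_i; rewrite size_cat ltn_addr.
have lt_cat2 i : (i < size Gs2)%N -> (size Gs1 + i < size (Gs1 ++ Gs2))%N.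
  by move=> lt_i; rewrite size_cat ltn_add2l.
have dens1 := good_a n a_le_n S.
have dens2 := good_b n b_le_n (fun i => S (size Gs1 + i)%N).
rewrite size_cat big_split_ord natrD mulrDl nth_cat pos1.
apply: ltrD.
- apply: dens1 => [i j lt_i lt_j|i lt_i]; first by apply: disjS; apply: lt_cat1.
  by have := indS _ (lt_cat1 _ lt_i); rewrite nth_cat lt_i.
- rewrite -headV ?(leq_trans b_ge1) //.
  apply: dens2 => [i j lt_i lt_j ij|i lt_i].
    by apply: disjS; rewrite ?lt_cat2 ?eqn_add2l.
  by have := indS _ (lt_cat2 _ lt_i); rewrite nth_cat ltnNge leq_addr addKn.
Qed.

Lemma cr_cat_le (Gs1 Gs2 : seq (hseq T)) (p q : R) :
  compatible (Gs1 ++ Gs2) -> (0 < size Gs1)%N -> (0 < size Gs2)%N ->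
  enat_le (cr (Gs1 ++ Gs2) (p + q)) (enat_max (cr Gs1 p) (cr Gs2 q)).
Proof.
move=> comp pos1 pos2.
case E1: (cr Gs1 p) => [a|]; last by case: cr.
case E2: (cr Gs2 q) => [b|]; last by case: cr.
apply/cr_good_le/cr_good_cat; [done | | exact: cr_SomeP | exact: cr_SomeP].
by move=> n; apply: compatible_cat_head.
Qed.

End CrCat.

Theorem lemma3 (R : realType) (T : choiceType) (m : nat) (Gs : seq (hseq T))
  (t : nat) (p q : R) :
  size Gs = m ->
  (forall i, (i < m)%N -> nontrivial_monotonic (nth (@hseq_dflt T) Gs i)) ->
  compatible Gs ->
  (1 <= t)%N -> (t < m)%N ->
  (0 < p)%R -> (0 < q)%R ->
  enat_le (cr Gs (p + q)%R) (enat_max (cr (take t Gs) p) (cr (drop t Gs) q)).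
Proof.
move=> size_Gs _ comp t_ge1 t_lt_m _ _.
rewrite -{1}(cat_take_drop t Gs); apply: cr_cat_le.
- by rewrite cat_take_drop.
- by rewrite size_take size_Gs t_lt_m.
- by rewrite size_drop size_Gs subn_gt0.
Qed.
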